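(* Let $w \in S_n$ avoid the patterns $321$ and $231$, with Lehmer code $(L_1,\dots,L_n)$, and let $P$ be the bottom pipe dream of $w$. Let $i$ be any row of $P$ containing at least one crossing (i.e. $L_i \ge 1$), and consider the diagonal line going upward and rightward from the leftmost crossing of row $i$ (in square $(i,1)$), i.e. passing through the squares $(i-t, 1+t)$ for $t \ge 1$, $i-t \ge 1$. Then for every such $t$, neither the square $(i-t,1+t)$ on this line nor the square $(i-t,t)$ immediately to its left contains a crossing of $P$.
   Context: The Lehmer code of $w$ is $L_i = |\{j>i : w(j)<w(i)\}|$. The bottom pipe dream of $w \in S_n$ is the filling of the $n \times n$ grid (rows numbered $1,\dots,n$ from top to bottom, columns $1,\dots,n$ from left to right; square $(r,c)$ is in row $r$ and column $c$) in which square $(r,c)$ contains a crossing if $c \le L_r$ and a pair of elbows otherwise. Pattern containment: $w$ contains $p \in S_k$ if some subsequence $w(i_1),\dots,w(i_k)$, $i_1<\dots<i_k$, has the same relative order as $p$; otherwise $w$ avoids $p$. *)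

From mathcomp Require Import all_boot.
From mathcomp Require Import fingroup perm.
Set Implicit Arguments. Unset Strict Implicit. Unset Printing Implicit Defensive.

(* Permutations of S_n are {perm 'I_n}; position k (1-indexed in the paper)
   is the ordinal with value k-1, and values are likewise shifted by one
   (irrelevant for relative order). *)

Definition contains (n k : nat) (w : {perm 'I_n}) (p : {perm 'I_k}) : Prop :=
  exists f : 'I_k -> 'I_n,
    (forall a b : 'I_k, a < b -> f a < f b) /\
    (forall a b : 'I_k, (w (f a) < w (f b)) = (p a < p b)).

Definition avoids (n k : nat) (w : {perm 'I_n}) (p : {perm 'I_k}) : Prop :=
  ~ contains w p.

Definition pat321_fun (i : 'I_3) : 'I_3 := rev_ord i.
Lemma pat321_inj : injective pat321_fun.
Proof. exact: rev_ord_inj. Qed.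
Definition pat321 : {perm 'I_3} := perm pat321_inj.

(* 231 : 1 -> 2, 2 -> 3, 3 -> 1 ; 0-indexed: 0->1, 1->2, 2->0 *)
Definition pat231_fun (i : 'I_3) : 'I_3 := inord ((i.+1) %% 3).
Lemma pat231_inj : injective pat231_fun.
Proof.
move=> i j; rewrite /pat231_fun => /(congr1 val) /=.
rewrite (@inordK 2 (i.+1 %% 3)) ?ltn_mod // (@inordK 2 (j.+1 %% 3)) ?ltn_mod //.
by case: i j => [[|[|[|?]]] ?] [[|[|[|?]]] ?] //= _; apply/val_inj.
Qed.
Definition pat231 : {perm 'I_3} := perm pat231_inj.

(* Lehmer code, 1-indexed: L_i = #{j > i : w(j) < w(i)}, and 0 for i outside 1..n. *)
Definition lehmer (n : nat) (w : {perm 'I_n}) (i : nat) : nat :=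
  if i is i'.+1 then
    if i' < n =P true is ReflectT H then
      #|[set j : 'I_n | (i' < j) && (w j < w (Ordinal H))]|
    else 0
  else 0.

(* Square (r,c) (1-indexed) of the bottom pipe dream contains a crossing. *)
Definition bottom_cross (n : nat) (w : {perm 'I_n}) (r c : nat) : bool :=
  [&& 1 <= r <= n, 1 <= c <= n & c <= lehmer w r].

From mathcomp Require Import all_boot.
From mathcomp Require Import fingroup perm.
From mathcomp Require Import zify.
Set Implicit Arguments. Unset Strict Implicit.

(* Idea: let r = i - t and pick j > i with w(j) < w(i).  Avoiding 321 forces
   w(r) < w(i); avoiding 231 then forbids any k > i with w(k) < w(r), and k = i
   is excluded too.  So every inversion of r lies strictly between r and i,
   whence L_r <= t - 1 and row r of the pipe dream has no crossing in
   columns t or t + 1. *)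

Lemma contains3 n (w : {perm 'I_n}) (p : {perm 'I_3}) (a b c : 'I_n) :
  a < b -> b < c ->
  (forall x y : 'I_3,
     (w (nth a [:: a; b; c] x) < w (nth a [:: a; b; c] y)) = (p x < p y)) ->
  contains w p.
Proof.
move=> ab bc wp; exists (fun x => nth a [:: a; b; c] x); split => //.
by case=> [[|[|[|?]]] ?] [[|[|[|?]]] ?] //= _; lia.
Qed.

Lemma contains321 n (w : {perm 'I_n}) (a b c : 'I_n) :
  a < b -> b < c -> w b < w a -> w c < w b -> contains w pat321.
Proof.
move=> ab bc ba cb; apply: (contains3 ab bc).
by case=> [[|[|[|?]]] ?] [[|[|[|?]]] ?] //=; rewrite !permE /=; lia.
Qed.

Lemma contains231 n (w : {perm 'I_n}) (a b c : 'I_n) :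
  a < b -> b < c -> w a < w b -> w c < w a -> contains w pat231.
Proof.
move=> ab bc ab' ca; apply: (contains3 ab bc).
by case=> [[|[|[|?]]] ?] [[|[|[|?]]] ?] //=;
  rewrite !permE /pat231_fun /= ?inordK //=; lia.
Qed.

Lemma card_ord_between n (A : {pred 'I_n}) (r i : nat) :
  {in A, forall j : 'I_n, r < j < i} -> #|A| <= i - r.+1.
Proof.
move=> Abetween; rewrite cardE -(size_map val) -(size_iota r.+1 (i - r.+1)).
apply: uniq_leq_size; first by rewrite map_inj_uniq ?enum_uniq //; apply: val_inj.
move=> x /mapP[k]; rewrite mem_enum => /Abetween kbetween ->.
by rewrite mem_iota /=; lia.
Qed.

Section LehmerCode.

Variables (n : nat) (w : {perm 'I_n}).

Lemma lehmerE (i : 'I_n) :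
  lehmer w i.+1 = #|[set j : 'I_n | (i < j) && (w j < w i)]|.
Proof.
rewrite /lehmer; case: eqP => [i_lt|]; last by rewrite ltn_ord.
by rewrite (_ : Ordinal i_lt = i) //; apply: val_inj.
Qed.

Lemma bottom_crossN (r c : nat) : lehmer w r < c -> ~~ bottom_cross w r c.
Proof. by move=> Lr; apply/negP => /and3P[_ _]; lia. Qed.

Lemma perm_val_inj (a b : 'I_n) : (w a = w b :> nat) -> a = b.
Proof. by move/val_inj/perm_inj. Qed.

Hypotheses (w_avoid321 : avoids w pat321) (w_avoid231 : avoids w pat231).

Lemma avoid321_lt_mid (a b c : 'I_n) :
  a < b -> b < c -> w c < w b -> w a < w b.
Proof.
move=> ab bc cb; case: (ltngtP (w a) (w b)) => // [ba | /perm_val_inj a_b].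
  by case: w_avoid321; apply: (contains321 ab bc).
by move: ab; rewrite a_b ltnn.
Qed.

Lemma avoid231_lt_last (a b c : 'I_n) :
  a < b -> b < c -> w a < w b -> w a < w c.
Proof.
move=> ab bc ab'; case: (ltngtP (w a) (w c)) => // [ca | /perm_val_inj a_c].
  by case: w_avoid231; apply: (contains231 ab bc).
by move: bc; rewrite -a_c ltnNge ltnW.
Qed.

Lemma lehmer_lt_before_descent (r i : 'I_n) :
  r < i -> 0 < lehmer w i.+1 -> lehmer w r.+1 < i - r.
Proof.
rewrite !lehmerE => ri; rewrite card_gt0 => /set0Pn[j]; rewrite inE => /andP[ij ji].
have ri' : w r < w i := avoid321_lt_mid ri ij ji.
suff: #|[set k : 'I_n | (r < k) && (w k < w r)]| <= i - r.+1 by lia.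
apply: card_ord_between => k; rewrite inE => /andP[rk kr]; rewrite rk /=.
case: (ltngtP k i) => // [ik | /val_inj k_i].
  by move: kr; rewrite ltnNge ltnW // (avoid231_lt_last ri ik ri').
by move: kr; rewrite k_i ltnNge ltnW.
Qed.

End LehmerCode.

Theorem lemma17 (n : nat) (w : {perm 'I_n}) :
  avoids w pat321 -> avoids w pat231 ->
  forall i : nat, 1 <= i <= n -> 1 <= lehmer w i ->
  forall t : nat, 1 <= t -> t < i ->
    ~~ bottom_cross w (i - t) (1 + t) /\ ~~ bottom_cross w (i - t) t.
Proof.
move=> w321 w231 [//|i] /andP[_ i_lt] Li t t_gt0 ti.
suff Lr : lehmer w (i.+1 - t) < t by split; apply: bottom_crossN; lia.
have r_lt : i - t < n by lia.
have -> : i.+1 - t = (Ordinal r_lt).+1 by rewrite /=; lia.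
have r_lt_i : Ordinal r_lt < Ordinal i_lt by rewrite /=; lia.
move: (lehmer_lt_before_descent w321 w231 r_lt_i Li) => /leq_trans; apply.
by rewrite /=; lia.
Qed.
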